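(* Let $(A,\mu_A,\alpha_A)$ be a Hom-associative algebra over a field $k$, let $\sigma:A\to A$ be an involutive ($\sigma^2=\mathrm{id}_A$) algebra automorphism of $(A,\mu_A)$ with $\alpha_A\circ\sigma=\sigma\circ\alpha_A$, and let $q\in k$, $q\neq0$. Let $C(k,q)=k[v]/(v^2=q)$, regarded as a Hom-associative algebra with structure map the identity. Define $R:C(k,q)\otimes A\to A\otimes C(k,q)$ by $R(1\otimes a)=a\otimes1$, $R(v\otimes a)=\sigma(a)\otimes v$. Let $\overline{A}$ be $A\otimes C(k,q)$ with multiplication $(a\otimes1+b\otimes v)(c\otimes1+d\otimes v)=(ac+qb\sigma(d))\otimes1+(ad+b\sigma(c))\otimes v$. Then $R$ is a Hom-twisting map, and the Hom-twisted tensor product $A\otimes_R C(k,q)$ and $\overline{A}$ are isomorphic as algebras. Consequently $\overline{A}$ is a Hom-associative algebra.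
   Context: A Hom-associative algebra is $(A,\mu,\alpha)$ with $\mu(a\otimes a')=aa'$, $\alpha(aa')=\alpha(a)\alpha(a')$ and $\alpha(a)(a'a'')=(aa')\alpha(a'')$. For Hom-associative algebras $(A,\mu_A,\alpha_A),(B,\mu_B,\alpha_B)$, a Hom-twisting map is a linear $R:B\otimes A\to A\otimes B$ with $(\alpha_A\otimes\alpha_B)\circ R=R\circ(\alpha_B\otimes\alpha_A)$, $R\circ(\alpha_B\otimes\mu_A)=(\mu_A\otimes\alpha_B)\circ(\mathrm{id}_A\otimes R)\circ(R\otimes\mathrm{id}_A)$, $R\circ(\mu_B\otimes\alpha_A)=(\alpha_A\otimes\mu_B)\circ(R\otimes\mathrm{id}_B)\circ(\mathrm{id}_B\otimes R)$; the Hom-twisted tensor product $A\otimes_R B$ is $A\otimes B$ with product $(\mu_A\otimes\mu_B)\circ(\mathrm{id}_A\otimes R\otimes\mathrm{id}_B)$ and structure map $\alpha_A\otimes\alpha_B$. *)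

From HB Require Import structures.
From mathcomp Require Import all_boot all_order all_algebra.
Set Implicit Arguments. Unset Strict Implicit. Unset Printing Implicit Defensive.
Import GRing.Theory.
Local Open Scope ring_scope.

(* C(k,q) = k[v]/(v^2 = q) has basis {1, v}; we index this basis by bool
   (false = 1, true = v).  Consequently
   - A (x) C(k,q) is represented by A * A : the pair (a, b) is a(x)1 + b(x)v;
   - a linear map R : C(k,q) (x) A -> A (x) C(k,q) is given by the two
     linear maps R1 a := R(1 (x) a) and Rv a := R(v (x) a), of type A -> A * A. *)

Section Defs.
Variable k : fieldType.

Definition lin_map (T U : lmodType k) (f : T -> U) :=
  forall (c : k) (x y : T), f (c *: x + y) = c *: f x + f y.

Definition bilin_map (T : lmodType k) (mu : T -> T -> T) :=
  (forall (z : T) (c : k) (x y : T), mu (c *: x + y) z = c *: mu x z + mu y z) /\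
  (forall (z : T) (c : k) (x y : T), mu z (c *: x + y) = c *: mu z x + mu z y).

Definition hom_assoc_algebra (T : lmodType k) (mu : T -> T -> T) (alpha : T -> T) :=
  [/\ bilin_map mu, lin_map alpha,
      (forall a b, alpha (mu a b) = mu (alpha a) (alpha b)) &
      (forall a b c, mu (alpha a) (mu b c) = mu (mu a b) (alpha c))].

Variable A : lmodType k.

(* f (x) id on A (x) C *)
Definition tmap (f : A -> A) (p : A * A) : A * A := (f p.1, f p.2).

(* R restricted to e (x) A, e a basis vector of C *)
Definition Rb (R1 Rv : A -> A * A) (e : bool) : A -> A * A := if e then Rv else R1.

(* R : C(k,q) (x) A -> A (x) C(k,q) is a Hom-twisting map, where
   (A, mu, alpha) is Hom-associative and B = C(k,q) has structure map id,
   multiplication 1*1 = 1, 1*v = v*1 = v, v*v = q 1.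
   The axioms are identities of linear maps; by (multi)linearity they are
   stated on the spanning families c (x) a, c (x) a (x) a', c (x) c' (x) a
   with c, c' basis vectors of C. *)
Definition hom_twisting (q : k) (mu : A -> A -> A) (alpha : A -> A)
  (R1 Rv : A -> A * A) :=
  [/\ lin_map R1, lin_map Rv,
   (* (alpha_A (x) alpha_B) o R = R o (alpha_B (x) alpha_A) *)
   (forall e a, Rb R1 Rv e (alpha a) = tmap alpha (Rb R1 Rv e a)),
   (* R o (alpha_B (x) mu_A) = (mu_A (x) alpha_B) o (id (x) R) o (R (x) id) *)
   (forall e a a',
      Rb R1 Rv e (mu a a') =
      let: (a1, a2) := Rb R1 Rv e a in
      (mu a1 (R1 a').1 + mu a2 (Rv a').1, mu a1 (R1 a').2 + mu a2 (Rv a').2)) &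
   (* R o (mu_B (x) alpha_A) = (alpha_A (x) mu_B) o (R (x) id) o (id (x) R) *)
   (forall e e' a,
      (if e && e' then q else 1) *: Rb R1 Rv (e (+) e') (alpha a) =
      let: (b1, b2) := Rb R1 Rv e' a in
      let: (s1, s2) := Rb R1 Rv e b1 in
      let: (t1, t2) := Rb R1 Rv e b2 in
      (alpha s1 + q *: alpha t2, alpha s2 + alpha t1))].

(* One summand of (mu_A (x) mu_B) o (id (x) R (x) id) applied to
   x (x) (r1 (x) 1 + r2 (x) v) (x) f, with f a basis vector of C. *)
Definition tw_term (q : k) (mu : A -> A -> A) (x : A) (r : A * A) (f : bool) : A * A :=
  if f then (q *: mu x r.2, mu x r.1) else (mu x r.1, mu x r.2).

Definition tw_mul (q : k) (mu : A -> A -> A) (R1 Rv : A -> A * A)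
  (x y : A * A) : A * A :=
  tw_term q mu x.1 (R1 y.1) false + tw_term q mu x.1 (R1 y.2) true +
  tw_term q mu x.2 (Rv y.1) false + tw_term q mu x.2 (Rv y.2) true.

Definition R1_sigma (a : A) : A * A := (a, 0).
Definition Rv_sigma (sigma : A -> A) (a : A) : A * A := (0, sigma a).

Definition bar_mul (q : k) (mu : A -> A -> A) (sigma : A -> A) (x y : A * A) : A * A :=
  (mu x.1 y.1 + q *: mu x.2 (sigma y.2), mu x.1 y.2 + mu x.2 (sigma y.1)).

End Defs.

From mathcomp Require Import all_boot all_order all_algebra.
Import GRing.Theory.
Local Open Scope ring_scope.

(* With R(1 (x) a) = a (x) 1 and R(v (x) a) = sigma(a) (x) v, each of the twisting
   axioms, evaluated on basis vectors of C(k,q), reduces to a property of sigma: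
   linearity, multiplicativity, commutation with alpha, and sigma^2 = id (which
   absorbs v.v = q). The product of A (x)_R C(k,q) is then literally the
   product of A-bar, so the identity is the isomorphism; Hom-associativity of
   A-bar follows by expanding both sides and using the same four properties. *)

Section LinMap.
Context {k : fieldType} {T U : lmodType k} {f : T -> U}.
Hypothesis f_lin : lin_map f.

Lemma lin_map0 : f 0 = 0.
Proof.
have := f_lin 1 0 0; rewrite !scale1r addr0 => /esym f0.
by apply: (addrI (f 0)); rewrite addr0.
Qed.

Lemma lin_mapD x y : f (x + y) = f x + f y.
Proof. by have := f_lin 1 x y; rewrite !scale1r. Qed.

Lemma lin_mapZ c x : f (c *: x) = c *: f x.
Proof. by have := f_lin c x 0; rewrite !addr0 lin_map0 addr0. Qed.

End LinMap.

Lemma pair_eq (T U : Type) (x y : T * U) : x.1 = y.1 -> x.2 = y.2 -> x = y.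
Proof. by case: x y => [? ?] [? ?] /= -> ->. Qed.

Section SigmaTwist.
Variables (k : fieldType) (A : lmodType k).
Variables (mu : A -> A -> A) (alpha sigma : A -> A) (q : k).
Hypothesis mu_bilin : bilin_map mu.
Hypothesis alpha_lin : lin_map alpha.
Hypothesis alpha_mul : forall a b, alpha (mu a b) = mu (alpha a) (alpha b).
Hypothesis mu_hom_assoc :
  forall a b c, mu (alpha a) (mu b c) = mu (mu a b) (alpha c).
Hypothesis sigma_lin : lin_map sigma.
Hypothesis sigma_mul : forall a b, sigma (mu a b) = mu (sigma a) (sigma b).
Hypothesis sigmaK : forall a, sigma (sigma a) = a.
Hypothesis alpha_sigma : forall a, alpha (sigma a) = sigma (alpha a).

Let mu_linl z : lin_map (mu^~ z). Proof. by move=> c x y; apply: mu_bilin.1. Qed.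
Let mu_linr z : lin_map (mu z). Proof. by move=> c x y; apply: mu_bilin.2. Qed.

Let mu0l z : mu 0 z = 0 := lin_map0 (mu_linl z).
Let mu0r z : mu z 0 = 0 := lin_map0 (mu_linr z).
Let muDl z x y : mu (x + y) z = mu x z + mu y z := lin_mapD (mu_linl z) x y.
Let muDr z x y : mu z (x + y) = mu z x + mu z y := lin_mapD (mu_linr z) x y.
Let muZl z c x : mu (c *: x) z = c *: mu x z := lin_mapZ (mu_linl z) c x.
Let muZr z c x : mu z (c *: x) = c *: mu z x := lin_mapZ (mu_linr z) c x.
Let alphaD := lin_mapD alpha_lin.
Let alphaZ := lin_mapZ alpha_lin.
Let sigmaD := lin_mapD sigma_lin.
Let sigmaZ := lin_mapZ sigma_lin.

Lemma hom_twisting_sigma :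
  hom_twisting q mu alpha (@R1_sigma k A) (Rv_sigma sigma).
Proof.
have alpha0 := lin_map0 alpha_lin; have sigma0 := lin_map0 sigma_lin.
split.
- by move=> c x y; apply: pair_eq; rewrite /= ?scaler0 ?addr0.
- by move=> c x y; apply: pair_eq; rewrite /= ?sigma_lin ?scaler0 ?addr0.
- by case=> a; rewrite /tmap /= ?alpha0 ?alpha_sigma.
- by case=> a a'; rewrite /= /R1_sigma /Rv_sigma /= ?mu0l ?mu0r ?addr0 ?add0r
    ?sigma_mul.
- case=> [] [] a; rewrite /= /R1_sigma /Rv_sigma /=
    ?sigma0 ?alpha0 ?sigmaK ?scaler0 ?addr0 ?add0r ?scale1r ?alpha_sigma //.
  by apply: pair_eq; rewrite /= ?scaler0.
Qed.

Lemma tw_mul_sigma x y :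
  tw_mul q mu (@R1_sigma k A) (Rv_sigma sigma) x y = bar_mul q mu sigma x y.
Proof.
rewrite /tw_mul /tw_term /bar_mul /R1_sigma /Rv_sigma /= ?mu0r ?scaler0.
by apply: pair_eq; rewrite /= ?addr0 ?add0r.
Qed.

Lemma bar_mul_bilin : bilin_map (bar_mul q mu sigma).
Proof.
split=> z c x y; rewrite /bar_mul /=.
- rewrite !muDl !muZl; apply: pair_eq => /=;
    by rewrite !scalerDr ?scalerA ?[q * c]mulrC addrACA.
- rewrite !sigmaD !sigmaZ !muDr !muZr; apply: pair_eq => /=;
    by rewrite !scalerDr ?scalerA ?[q * c]mulrC addrACA.
Qed.

Lemma tmap_lin : lin_map (tmap alpha).
Proof. by move=> c x y; rewrite /tmap /= !alpha_lin. Qed.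

Lemma tmap_mul a b :
  tmap alpha (bar_mul q mu sigma a b)
  = bar_mul q mu sigma (tmap alpha a) (tmap alpha b).
Proof.
by rewrite /tmap /bar_mul /= !alphaD alphaZ !alpha_mul !alpha_sigma.
Qed.

Lemma bar_mul_hom_assoc a b c :
  bar_mul q mu sigma (tmap alpha a) (bar_mul q mu sigma b c)
  = bar_mul q mu sigma (bar_mul q mu sigma a b) (tmap alpha c).
Proof.
rewrite /tmap /bar_mul /= !sigmaD !sigmaZ !sigma_mul !sigmaK.
rewrite !muDr !muZr !muDl !muZl -!alpha_sigma !mu_hom_assoc !scalerDr.
have swap (V : zmodType) (u w x y : V) : u + w + (x + y) = u + y + (w + x).
  by rewrite -!addrA; congr (_ + _); rewrite [RHS]addrC -addrA.
by apply: pair_eq; rewrite /= swap.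
Qed.

Lemma bar_hom_assoc_algebra :
  hom_assoc_algebra (bar_mul q mu sigma) (tmap alpha).
Proof.
split; [exact: bar_mul_bilin | exact: tmap_lin | exact: tmap_mul |].
exact: bar_mul_hom_assoc.
Qed.

End SigmaTwist.

Theorem proposition2p11 (k : fieldType) (A : lmodType k)
  (mu : A -> A -> A) (alpha sigma : A -> A) (q : k) :
  hom_assoc_algebra mu alpha ->
  lin_map sigma ->
  (forall a b, sigma (mu a b) = mu (sigma a) (sigma b)) ->
  bijective sigma ->
  (forall a, sigma (sigma a) = a) ->
  (forall a, alpha (sigma a) = sigma (alpha a)) ->
  q != 0 ->
  [/\ hom_twisting q mu alpha (@R1_sigma k A) (Rv_sigma sigma),
      (exists phi : A * A -> A * A,
         [/\ lin_map phi, bijective phi &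
             forall x y, phi (tw_mul q mu (@R1_sigma k A) (Rv_sigma sigma) x y)
                         = bar_mul q mu sigma (phi x) (phi y)]) &
      hom_assoc_algebra (bar_mul q mu sigma) (tmap alpha)].
Proof.
move=> [mu_bilin alpha_lin alpha_mul mu_assoc] sigma_lin sigma_mul _ sigmaK
  alpha_sigma _.
split.
- exact: hom_twisting_sigma.
- exists id; split=> //; first by exists id.
  exact: tw_mul_sigma.
- exact: bar_hom_assoc_algebra.
Qed.
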